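(* Let $0<\alpha\le \pi/4$ and let $\mathcal N_\alpha(\rho)=E_\alpha\rho E_\alpha^\dagger+D_\alpha\rho D_\alpha^\dagger$ on $\mathcal L(\mathbb C^3)$ with $E_\alpha=\sin\alpha\,|0\rangle\langle 1|+|1\rangle\langle 2|$ and $D_\alpha=\cos\alpha\,|2\rangle\langle 1|+|1\rangle\langle 0|$. Let $S=\mathrm{span}\{E^\dagger F: E,F\in\{E_\alpha,D_\alpha\}\}$ be its non-commutative graph. Then $$\tilde\vartheta(\mathcal N_\alpha):=\tilde\vartheta(S)=2+\cos^2\alpha+\cos^{-2}\alpha>4.$$
   Context: For a subspace $S\subseteq\mathcal L(A')$ (with $A\cong A'$, $|\Phi\rangle=\sum_i|i\rangle_A|i\rangle_{A'}$), the quantum Lovász number is the SDP value $\tilde\vartheta(S)=\max\{\langle\Phi|(\mathbb 1\otimes\rho+T)|\Phi\rangle:\ T\in S^\perp\otimes\mathcal L(A'),\ \mathrm{tr}\rho=1,\ \rho\ge0,\ \mathbb 1\otimes\rho+T\ge0\}$, where $S^\perp$ is the orthogonal complement of $S$ with respect to the Hilbert–Schmidt inner product. Equivalently (by strong duality) $\tilde\vartheta(S)=\min\{\|\mathrm{tr}_A Y\|_\infty:\ Y\in S\otimes\mathcal L(A'),\ Y\ge|\Phi\rangle\langle\Phi|\}$. *)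

From HB Require Import structures.
From mathcomp Require Import all_boot all_order all_algebra.
From mathcomp Require Import complex mxtens.
From mathcomp Require Import reals trigo.
Set Implicit Arguments. Unset Strict Implicit. Unset Printing Implicit Defensive.
Import Order.TTheory GRing.Theory Num.Theory.
Local Open Scope ring_scope.

Section QL.
Variable R : realType.
Local Notation C := (complex R).

Definition adjmx m n (M : 'M[C]_(m, n)) : 'M[C]_(n, m) := (map_mx Num.conj M)^T.

Definition psdmx n (M : 'M[C]_n) : Prop :=
  M = adjmx M /\ forall v : 'cV[C]_n, 0 <= (adjmx v *m M *m v) 0 0.

Definition hs n (X Y : 'M[C]_n) : C := \tr (adjmx X *m Y).

Definition in_span n (gens : seq 'M[C]_n) (X : 'M[C]_n) : Prop :=
  exists c : 'I_(size gens) -> C,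
    X = \sum_(i < size gens) c i *: nth 0 gens i.

Definition in_perp n (S : 'M[C]_n -> Prop) (X : 'M[C]_n) : Prop :=
  forall Y, S Y -> hs Y X = 0.

(* The subspace V (x) L(A') of L(A (x) A'), with A' = C^n *)
Definition in_tens_full n (V : 'M[C]_n -> Prop) (T : 'M[C]_(n * n)) : Prop :=
  exists (k : nat) (v : 'I_k -> 'M[C]_n) (M : 'I_k -> 'M[C]_n),
    (forall i, V (v i)) /\ T = \sum_(i < k) (v i *t M i).

(* Unnormalized maximally entangled vector |Phi> = sum_i |i>_A |i>_A' *)
Definition Phi n : 'cV[C]_(n * n) :=
  \sum_(i < n) ((delta_mx i 0 : 'cV[C]_n) *t (delta_mx i 0 : 'cV[C]_n)).

Definition qlov_obj n (rho : 'M[C]_n) (T : 'M[C]_(n * n)) : C :=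
  (adjmx (Phi n) *m ((1%:M : 'M[C]_n) *t rho + T) *m Phi n) 0 0.

Definition is_qlovasz n (S : 'M[C]_n -> Prop) (v : C) : Prop :=
  (exists (rho : 'M[C]_n) (T : 'M[C]_(n * n)),
      in_tens_full (in_perp S) T /\ \tr rho = 1 /\ psdmx rho /\
      psdmx ((1%:M : 'M[C]_n) *t rho + T) /\ qlov_obj rho T = v) /\
  (forall (rho : 'M[C]_n) (T : 'M[C]_(n * n)),
      in_tens_full (in_perp S) T -> \tr rho = 1 -> psdmx rho ->
      psdmx ((1%:M : 'M[C]_n) *t rho + T) -> qlov_obj rho T <= v).

Definition nc_graph n (Ks : seq 'M[C]_n) : 'M[C]_n -> Prop :=
  in_span [seq adjmx E *m F | E <- Ks, F <- Ks].

(* Kraus operators of N_alpha on C^3, with |i><j| = delta_mx i j *)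
Definition E_al (a : R) : 'M[C]_3 :=
  ((sin a)%:C)%C *: delta_mx 0 1 + delta_mx 1 2.
Definition D_al (a : R) : 'M[C]_3 :=
  ((cos a)%:C)%C *: delta_mx 2 1 + delta_mx 1 0.

End QL.

(** Write c = cos α, s = sin α and λ = 2 + c² + c⁻².

    Lower bound: ρ = (c²|0⟩⟨0| + |1⟩⟨1|)/(1 + c²), together with a T built from
    the elements diag(-c², 1, -s²), |0⟩⟨1|, |1⟩⟨0| of S^⊥, is feasible because
    1 ⊗ ρ + T = ψψ† + (nonnegative multiples of |20⟩⟨20| and |21⟩⟨21|) with
    ψ = c|00⟩ + c⁻¹|11⟩, and its value is ⟨Φ|ψ⟩² = (c + c⁻¹)² = λ.

    Upper bound: for feasible (ρ, T) put X = 1 ⊗ ρ + T and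
    w = |00⟩ - c²|11⟩ + |22⟩.  Using only tr ρ = 1 and one linear relation
    satisfied by every T ∈ S^⊥ ⊗ L(A'),
      c²(λ - ⟨Φ|X|Φ⟩) = ⟨w|X|w⟩ + (1+c²)X₀₁,₀₁ + c²(1+c²)X₁₀,₁₀
                         + s²(1+c²)X₁₂,₁₂ + (1+c²)(c²-s²)ρ₂₂ ≥ 0.

    In both halves α ≤ π/4 enters only through s² ≤ c². *)

From HB Require Import structures.
From mathcomp Require Import all_boot all_order all_algebra.
From mathcomp Require Import complex mxtens.
From mathcomp Require Import reals trigo.
From mathcomp Require Import ring lra.
Import Order.TTheory GRing.Theory Num.Theory.
Local Open Scope ring_scope.

Section ComplexMatrices.
Context {R : realType}.
Local Notation C := (complex R).

Lemma conjC_real (x : R) : ((x%:C)%C : C)^* = (x%:C)%C.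
Proof. exact: conjc_real. Qed.

Lemma addmxE m n (A B : 'M[C]_(m, n)) i j : (A + B) i j = A i j + B i j.
Proof. by rewrite mxE. Qed.

Lemma mxtrace_delta n (i j : 'I_n) : \tr (delta_mx i j : 'M[C]_n) = (i == j)%:R.
Proof.
rewrite /mxtrace (bigD1 i) //= big1 => [|k /negbTE ki]; last by rewrite mxE ki.
by rewrite mxE eqxx addr0.
Qed.

Lemma adjmxE m n (M : 'M[C]_(m, n)) i j : adjmx M i j = (M j i)^*.
Proof. by rewrite !mxE. Qed.

Lemma adjmxD m n (A B : 'M[C]_(m, n)) : adjmx (A + B) = adjmx A + adjmx B.
Proof. by apply/matrixP=> i j; rewrite !(adjmxE, mxE) rmorphD. Qed.

Lemma adjmxZ m n k (A : 'M[C]_(m, n)) : adjmx (k *: A) = k^* *: adjmx A.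
Proof. by apply/matrixP=> i j; rewrite !(adjmxE, mxE) rmorphM. Qed.

Lemma adjmx_sum m n k (F : 'I_k -> 'M[C]_(m, n)) :
  adjmx (\sum_(t < k) F t) = \sum_(t < k) adjmx (F t).
Proof.
apply/matrixP=> i j; rewrite adjmxE !summxE rmorph_sum.
by apply: eq_bigr=> t _; rewrite adjmxE.
Qed.

Lemma adjmxK m n (A : 'M[C]_(m, n)) : adjmx (adjmx A) = A.
Proof. by apply/matrixP=> i j; rewrite !adjmxE conjCK. Qed.

Lemma adjmxM m n p (A : 'M[C]_(m, n)) (B : 'M[C]_(n, p)) :
  adjmx (A *m B) = adjmx B *m adjmx A.
Proof.
apply/matrixP=> i j; rewrite adjmxE !mxE rmorph_sum; apply: eq_bigr=> k _.
by rewrite !adjmxE rmorphM mulrC.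
Qed.

Lemma adjmx_delta m n (i : 'I_m) (j : 'I_n) :
  adjmx (delta_mx i j : 'M[C]_(m, n)) = delta_mx j i.
Proof. by apply/matrixP=> k l; rewrite adjmxE !mxE rmorph_nat andbC. Qed.

Lemma mulmx_adj_entry n (u w : 'cV[C]_n) x y :
  (u *m adjmx w) x y = u x 0 * (w y 0)^*.
Proof. by rewrite mxE big_ord1 adjmxE. Qed.

Definition braket {n} (X : 'M[C]_n) (u w : 'cV[C]_n) : C := (adjmx u *m X *m w) 0 0.

Lemma braketD n (X Y : 'M[C]_n) u w : braket (X + Y) u w = braket X u w + braket Y u w.
Proof. by rewrite /braket mulmxDr mulmxDl mxE. Qed.

Lemma braketDl n (X : 'M[C]_n) u u' w :
  braket X (u + u') w = braket X u w + braket X u' w.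
Proof. by rewrite /braket adjmxD !mulmxDl mxE. Qed.

Lemma braketDr n (X : 'M[C]_n) u w w' :
  braket X u (w + w') = braket X u w + braket X u w'.
Proof. by rewrite /braket mulmxDr mxE. Qed.

Lemma braketZl n (X : 'M[C]_n) k u w : braket X (k *: u) w = k^* * braket X u w.
Proof. by rewrite /braket adjmxZ -!scalemxAl mxE. Qed.

Lemma braketZr n (X : 'M[C]_n) k u w : braket X u (k *: w) = k * braket X u w.
Proof. by rewrite /braket -scalemxAr mxE. Qed.

Lemma braket_suml n k (X : 'M[C]_n) (F : 'I_k -> 'cV[C]_n) w :
  braket X (\sum_(t < k) F t) w = \sum_(t < k) braket X (F t) w.
Proof. by rewrite /braket adjmx_sum !mulmx_suml summxE. Qed.

Lemma braket_sumr n k (X : 'M[C]_n) u (F : 'I_k -> 'cV[C]_n) :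
  braket X u (\sum_(t < k) F t) = \sum_(t < k) braket X u (F t).
Proof. by rewrite /braket mulmx_sumr summxE. Qed.

Lemma braket_delta n (X : 'M[C]_n) i j :
  braket X (delta_mx i 0) (delta_mx j 0) = X i j.
Proof. by rewrite /braket adjmx_delta -rowE -colE !mxE. Qed.

Lemma psdmx_diag_ge0 n (X : 'M[C]_n) i : psdmx X -> 0 <= X i i.
Proof. by move=> [_ X_ge0]; rewrite -braket_delta; apply: X_ge0. Qed.

Lemma psdmxD n (A B : 'M[C]_n) : psdmx A -> psdmx B -> psdmx (A + B).
Proof.
move=> [hA A_ge0] [hB B_ge0]; split; first by rewrite adjmxD -hA -hB.
by move=> v; rewrite mulmxDr mulmxDl mxE addr_ge0.
Qed.

Lemma psdmxZ n k (A : 'M[C]_n) : 0 <= k -> psdmx A -> psdmx (k *: A).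
Proof.
move=> k_ge0 [hA A_ge0]; split; first by rewrite adjmxZ -hA conj_Creal ?ger0_real.
by move=> v; rewrite -scalemxAr -scalemxAl mxE mulr_ge0.
Qed.

Lemma psdmx_outer n (u : 'cV[C]_n) : psdmx (u *m adjmx u).
Proof.
split; first by rewrite adjmxM adjmxK.
move=> v; rewrite !mulmxA -(mulmxA (adjmx v *m u)) mxE big_ord1.
have -> : (adjmx v *m u) 0 0 = ((adjmx u *m v) 0 0)^*.
  by rewrite -adjmxE adjmxM adjmxK.
by rewrite mulrC mul_conjC_ge0.
Qed.

Lemma psdmx_delta n (i : 'I_n) : psdmx (delta_mx i i : 'M[C]_n).
Proof.
by rewrite -(mul_delta_mx (0 : 'I_1)) -[delta_mx 0 i]adjmx_delta; apply: psdmx_outer.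
Qed.

Lemma hsD n (A B V : 'M[C]_n) : hs (A + B) V = hs A V + hs B V.
Proof. by rewrite /hs adjmxD mulmxDl mxtraceD. Qed.

Lemma hsZ n k (A V : 'M[C]_n) : hs (k *: A) V = k^* * hs A V.
Proof. by rewrite /hs adjmxZ -scalemxAl mxtraceZ. Qed.

Lemma hs_sum n k (F : 'I_k -> 'M[C]_n) V :
  hs (\sum_(t < k) F t) V = \sum_(t < k) hs (F t) V.
Proof. by rewrite /hs adjmx_sum mulmx_suml raddf_sum. Qed.

Lemma hs_delta n (i j : 'I_n) (V : 'M[C]_n) : hs (delta_mx i j) V = V i j.
Proof.
rewrite /hs adjmx_delta /mxtrace (bigD1 j) //= big1 => [|k /negbTE kj].
  rewrite addr0 mxE (bigD1 i) //= big1 => [|l /negbTE li].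
    by rewrite !mxE !eqxx mul1r addr0.
  by rewrite mxE li andbF mul0r.
by rewrite mxE big1 // => l _; rewrite mxE kj mul0r.
Qed.

Lemma in_perp_spanP n (gens : seq 'M[C]_n) (V : 'M[C]_n) :
  in_perp (in_span gens) V <-> forall Y, Y \in gens -> hs Y V = 0.
Proof.
split=> [perpV Y /(nthP 0) [k ltk <-] | perp_gens Y [cf ->]].
  apply: perpV; exists (fun t => (t == Ordinal ltk)%:R).
  rewrite (bigD1 (Ordinal ltk)) //= eqxx scale1r big1 ?addr0 // => t /negbTE ->.
  by rewrite scale0r.
by rewrite hs_sum big1 // => t _; rewrite hsZ perp_gens ?mulr0 // mem_nth.
Qed.

Lemma in_tens_full_tens n (V : 'M[C]_n -> Prop) v (M : 'M[C]_n) :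
  V v -> in_tens_full V (v *t M).
Proof. by move=> Vv; exists 1%N, (fun=> v), (fun=> M); rewrite big_ord1. Qed.

Lemma in_tens_fullD n (V : 'M[C]_n -> Prop) T1 T2 :
  in_tens_full V T1 -> in_tens_full V T2 -> in_tens_full V (T1 + T2).
Proof.
move=> [k1 [v1 [M1 [V1 ->]]]] [k2 [v2 [M2 [V2 ->]]]].
pose glue (F1 : 'I_k1 -> 'M[C]_n) (F2 : 'I_k2 -> 'M[C]_n) t :=
  match split t with inl i => F1 i | inr j => F2 j end.
exists (k1 + k2)%N, (glue v1 v2), (glue M1 M2); split.
  by move=> t; rewrite /glue; case: split.
rewrite big_split_ord /glue; congr (_ + _); apply: eq_bigr => t _.
  by rewrite -[lshift _ _]/(unsplit (inl t)) unsplitK.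
by rewrite -[rshift _ _]/(unsplit (inr t)) unsplitK.
Qed.

Lemma mxtens_index_eq m n (i k : 'I_m) (j l : 'I_n) :
  (mxtens_index (i, j) == mxtens_index (k, l)) = (i == k) && (j == l).
Proof. by rewrite (inj_eq (can_inj (@mxtens_indexK m n))) xpair_eqE. Qed.

Lemma tens_delta m n p q (i : 'I_m) (k : 'I_n) (j : 'I_p) (l : 'I_q) :
  (delta_mx i k : 'M[C]_(m, n)) *t (delta_mx j l : 'M[C]_(p, q)) =
  delta_mx (mxtens_index (i, j)) (mxtens_index (k, l)).
Proof.
apply/matrixP=> x y; case: (mxtens_indexP x) => i' j'.
case: (mxtens_indexP y) => k' l'.
rewrite tensmxE !mxE !mxtens_index_eq.
by case: (i' == i); case: (j' == j); case: (k' == k); case: (l' == l);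
  rewrite ?mul0r ?mulr0 ?mul1r.
Qed.

Lemma tens1mx_addE n (rho : 'M[C]_n) (T : 'M[C]_(n * n)) i j k l :
  (1%:M *t rho + T) (mxtens_index (i, j)) (mxtens_index (k, l)) =
  (i == k)%:R * rho j l + T (mxtens_index (i, j)) (mxtens_index (k, l)).
Proof. by rewrite mxE tensmxE mxE. Qed.

Lemma PhiE n : Phi R n = \sum_(i < n) delta_mx (mxtens_index (i, i)) 0.
Proof. by apply: eq_bigr => i _; rewrite tens_delta; congr delta_mx; apply: val_inj. Qed.

Lemma braket_Phi n (X : 'M[C]_(n * n)) :
  braket X (Phi R n) (Phi R n) =
  \sum_(i < n) \sum_(k < n) X (mxtens_index (i, i)) (mxtens_index (k, k)).
Proof.
rewrite PhiE braket_suml; apply: eq_bigr => i _.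
by rewrite braket_sumr; apply: eq_bigr => k _; rewrite braket_delta.
Qed.

Lemma braket_Phi_tens n (A B : 'M[C]_n) :
  braket (A *t B) (Phi R n) (Phi R n) = \tr (A *m B^T).
Proof.
rewrite braket_Phi; apply: eq_bigr => i _; rewrite mxE.
by apply: eq_bigr => k _; rewrite tensmxE mxE.
Qed.

Lemma qlov_objE n (rho : 'M[C]_n) (T : 'M[C]_(n * n)) :
  qlov_obj rho T = \tr rho + braket T (Phi R n) (Phi R n).
Proof. by rewrite [LHS]braketD braket_Phi_tens mul1mx mxtrace_tr. Qed.

End ComplexMatrices.

Lemma sum_ord3 (V : nmodType) (F : 'I_3 -> V) : \sum_(i < 3) F i = F 0 + F 1 + F 2.
Proof.
by rewrite !big_ord_recl big_ord0 addr0 addrA; congr (F _ + F _ + F _); apply: val_inj.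
Qed.

Lemma ord3P (i : 'I_3) : [\/ i = 0, i = 1 | i = 2].
Proof.
by case: i => [[|[|[|m]]] lt_i3] //; [apply: Or31 | apply: Or32 | apply: Or33]; apply: val_inj.
Qed.

Section Nalpha.
Context {R : realType}.
Variable a : R.
Hypothesis cos_a_gt0 : 0 < cos a.
Hypothesis sin2_le_cos2_a : sin a ^+ 2 <= cos a ^+ 2.

Local Notation C := (complex R).
Local Notation c := ((cos a)%:C)%C.
Local Notation s := ((sin a)%:C)%C.
Local Notation S := (nc_graph [:: E_al a; D_al a]).
Local Notation idx i j := (@mxtens_index 3 3 (i, j)).
Local Notation lam := (2 + c ^+ 2 + (c ^+ 2)^-1).

Lemma c_neq0 : c != 0.
Proof. by rewrite fmorph_eq0 gt_eqF. Qed.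

Lemma c2_gt0 : 0 < c ^+ 2.
Proof. by rewrite -rmorphXn ltcR exprn_gt0. Qed.

Lemma s2_ge0 : 0 <= s ^+ 2.
Proof. by rewrite -rmorphXn ler0c sqr_ge0. Qed.

Lemma s2_le_c2 : s ^+ 2 <= c ^+ 2.
Proof. by rewrite -!rmorphXn lecR. Qed.

Lemma add1_c2_neq0 : 1 + c ^+ 2 != 0.
Proof. by rewrite gt_eqF // ltr_pwDl // -rmorphXn ler0c sqr_ge0. Qed.

Lemma adjmx_E_al : adjmx (E_al a) = s *: delta_mx 1 0 + delta_mx 2 1.
Proof. by rewrite /E_al adjmxD adjmxZ !adjmx_delta conjC_real. Qed.

Lemma adjmx_D_al : adjmx (D_al a) = c *: delta_mx 1 2 + delta_mx 0 1.
Proof. by rewrite /D_al adjmxD adjmxZ !adjmx_delta conjC_real. Qed.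

Lemma hs_nc_graph_gens (v : 'M[C]_3) :
  [/\ hs (adjmx (E_al a) *m E_al a) v = s ^+ 2 * v 1 1 + v 2 2,
      hs (adjmx (E_al a) *m D_al a) v = v 2 0,
      hs (adjmx (D_al a) *m E_al a) v = v 0 2 &
      hs (adjmx (D_al a) *m D_al a) v = c ^+ 2 * v 1 1 + v 0 0].
Proof.
rewrite adjmx_E_al adjmx_D_al /E_al /D_al.
rewrite !(mulmxDl, mulmxDr) -!scalemxAl -!scalemxAr !mul_delta_mx_cond /=.
rewrite !(mulr0n, mulr1n, scaler0, addr0, add0r, scalerA).
by rewrite !(hsD, hsZ, hs_delta) !rmorphM /= !conjC_real !expr2.
Qed.

Definition nc_graph_perp_eqs (v : 'M[C]_3) : Prop :=
  [/\ v 0 0 + c ^+ 2 * v 1 1 = 0, v 2 2 + s ^+ 2 * v 1 1 = 0, v 0 2 = 0 & v 2 0 = 0].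

Lemma in_perp_nc_graphP v : in_perp S v <-> nc_graph_perp_eqs v.
Proof.
rewrite in_perp_spanP /=; have [gEE gED gDE gDD] := hs_nc_graph_gens v.
split=> [perp_v | [h00 h22 h02 h20] Y].
  by split; rewrite 1?addrC -?gEE -?gED -?gDE -?gDD perp_v // !inE eqxx ?orbT.
by rewrite !inE => /or4P [] /eqP ->; rewrite ?gEE ?gED ?gDE ?gDD 1?addrC.
Qed.

(* The left-hand side is ⟨Y, T⟩ for Y = D†D ⊗ (|0⟩⟨0| + |1⟩⟨1|) + E†E ⊗ |2⟩⟨2|
   + D†E ⊗ |0⟩⟨2| + E†D ⊗ |2⟩⟨0| ∈ S ⊗ L(A'). *)
Lemma tens_nc_graph_perp_dual T : in_tens_full (in_perp S) T ->
  T (idx 0 0) (idx 0 0) + T (idx 0 1) (idx 0 1) + T (idx 0 0) (idx 2 2)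
  + T (idx 2 2) (idx 0 0) + c ^+ 2 * (T (idx 1 0) (idx 1 0) + T (idx 1 1) (idx 1 1))
  + s ^+ 2 * T (idx 1 2) (idx 1 2) + T (idx 2 2) (idx 2 2) = 0.
Proof.
move=> [k [v [M [perp_v ->]]]].
rewrite !summxE -!big_split /= !mulr_sumr -!big_split /=.
apply: big1 => m _; rewrite !tensmxE.
have /in_perp_spanP /= perp := perp_v m.
have [gEE gED gDE gDD] := hs_nc_graph_gens (v m).
transitivity (hs (adjmx (D_al a) *m D_al a) (v m) * (M m 0 0 + M m 1 1)
  + hs (adjmx (E_al a) *m E_al a) (v m) * M m 2 2
  + hs (adjmx (D_al a) *m E_al a) (v m) * M m 0 2
  + hs (adjmx (E_al a) *m D_al a) (v m) * M m 2 0).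
  by rewrite gEE gED gDE gDD; ring.
by rewrite !perp ?mul0r ?addr0 // !inE eqxx ?orbT.
Qed.

Definition gap_vec : 'cV[C]_(3 * 3) :=
  delta_mx (idx 0 0) 0 + (- c ^+ 2) *: delta_mx (idx 1 1) 0 + delta_mx (idx 2 2) 0.

Lemma qlov_gap_decomposition (rho : 'M[C]_3) T :
  in_tens_full (in_perp S) T -> \tr rho = 1 ->
  let X := 1%:M *t rho + T in
  c ^+ 2 * (lam - qlov_obj rho T) =
  braket X gap_vec gap_vec + (1 + c ^+ 2) * X (idx 0 1) (idx 0 1)
  + c ^+ 2 * (1 + c ^+ 2) * X (idx 1 0) (idx 1 0)
  + s ^+ 2 * (1 + c ^+ 2) * X (idx 1 2) (idx 1 2)
  + (1 + c ^+ 2) * (c ^+ 2 - s ^+ 2) * rho 2 2.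
Proof.
move=> hT htr X.
have rho00 : rho 0 0 = 1 - rho 1 1 - rho 2 2 by rewrite -htr /mxtrace sum_ord3; ring.
rewrite qlov_objE htr braket_Phi !sum_ord3 /gap_vec.
rewrite !(braketDl, braketDr, braketZl, braketZr, braket_delta) /X !tens1mx_addE /=.
rewrite rmorphN rmorphXn /= conjC_real rho00.
(* The two sides differ by -(1 + c²) times the relation of tens_nc_graph_perp_dual. *)
apply/eqP; rewrite -subr_eq0 -(mulr0 (- (1 + c ^+ 2))) -(tens_nc_graph_perp_dual _ hT).
by apply/eqP; field; exact: c_neq0.
Qed.

Lemma qlov_obj_le (rho : 'M[C]_3) T :
  in_tens_full (in_perp S) T -> \tr rho = 1 -> psdmx rho ->
  psdmx (1%:M *t rho + T) -> qlov_obj rho T <= lam.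
Proof.
move=> hT htr rho_psd X_psd.
rewrite -subr_ge0 -(pmulr_rge0 _ c2_gt0) qlov_gap_decomposition //.
have c2_ge0 := ltW c2_gt0.
have k1 : 0 <= 1 + c ^+ 2 by rewrite addr_ge0.
have k2 : 0 <= c ^+ 2 * (1 + c ^+ 2) by rewrite mulr_ge0.
have k3 : 0 <= s ^+ 2 * (1 + c ^+ 2) by rewrite mulr_ge0 ?s2_ge0.
have k4 : 0 <= (1 + c ^+ 2) * (c ^+ 2 - s ^+ 2) by rewrite mulr_ge0 ?subr_ge0 ?s2_le_c2.
rewrite !addr_ge0 //; first exact: X_psd.2.
all: by apply: mulr_ge0; last exact: psdmx_diag_ge0.
Qed.

Definition rho_opt : 'M[C]_3 :=
  (1 + c ^+ 2)^-1 *: (c ^+ 2 *: delta_mx 0 0 + delta_mx 1 1).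

Definition v_opt : 'M[C]_3 :=
  (- c ^+ 2) *: delta_mx 0 0 + delta_mx 1 1 + (- s ^+ 2) *: delta_mx 2 2.

Definition K_opt : 'M[C]_3 :=
  (1 + c ^+ 2)^-1 *: ((- c ^+ 2) *: delta_mx 0 0 + (c ^+ 2)^-1 *: delta_mx 1 1).

Definition T_opt : 'M[C]_(3 * 3) :=
  v_opt *t K_opt + delta_mx 0 1 *t delta_mx 0 1 + delta_mx 1 0 *t delta_mx 1 0.

Definition psi_opt : 'cV[C]_(3 * 3) :=
  c *: delta_mx (idx 0 0) 0 + c^-1 *: delta_mx (idx 1 1) 0.

Lemma T_opt_in_tens : in_tens_full (in_perp S) T_opt.
Proof.
apply: in_tens_fullD; first apply: in_tens_fullD.
all: apply: in_tens_full_tens; apply/in_perp_nc_graphP.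
all: by split; rewrite /v_opt !mxE /=; ring.
Qed.

Lemma tr_rho_opt : \tr rho_opt = 1.
Proof.
rewrite /mxtrace sum_ord3 /rho_opt !mxE /=.
by field; exact: add1_c2_neq0.
Qed.

Lemma rho_opt_psd : psdmx rho_opt.
Proof.
have c2_ge0 := ltW c2_gt0.
have inv_ge0 : 0 <= (1 + c ^+ 2)^-1 by rewrite invr_ge0 addr_ge0.
rewrite /rho_opt scalerDr scalerA.
by apply: psdmxD; apply: psdmxZ (psdmx_delta _ _) => //; exact: mulr_ge0.
Qed.

Lemma X_opt_decomposition :
  1%:M *t rho_opt + T_opt = psi_opt *m adjmx psi_opt
    + (c ^+ 2 * (1 + s ^+ 2) / (1 + c ^+ 2)) *: delta_mx (idx 2 0) (idx 2 0)
    + ((c ^+ 2 - s ^+ 2) / (c ^+ 2 * (1 + c ^+ 2))) *: delta_mx (idx 2 1) (idx 2 1).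
Proof.
apply/matrixP => x y; case: (mxtens_indexP x) => i j; case: (mxtens_indexP y) => k l.
rewrite tens1mx_addE /T_opt addmxE addmxE !tensmxE.
rewrite !addmxE mulmx_adj_entry /rho_opt /K_opt /psi_opt !mxE !mxtens_index_eq.
rewrite rmorphD !rmorphM fmorphV /= !conjC_real !rmorph_nat.
case: (ord3P i) => ->; case: (ord3P j) => ->; case: (ord3P k) => ->; case: (ord3P l) => -> /=.
all: by field; do ?[apply/andP; split]; first [exact: c_neq0 | exact: add1_c2_neq0].
Qed.

Lemma X_opt_psd : psdmx (1%:M *t rho_opt + T_opt).
Proof.
rewrite X_opt_decomposition.
have c21_gt0 : 0 < 1 + c ^+ 2 by rewrite addr_gt0 ?c2_gt0.
have al0_ge0 : 0 <= c ^+ 2 * (1 + s ^+ 2) / (1 + c ^+ 2).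
  by rewrite divr_ge0 ?(ltW c21_gt0) // (mulr_ge0 (ltW c2_gt0)) // addr_ge0 ?s2_ge0.
have al1_ge0 : 0 <= (c ^+ 2 - s ^+ 2) / (c ^+ 2 * (1 + c ^+ 2)).
  by rewrite divr_ge0 ?subr_ge0 ?s2_le_c2 // ltW // mulr_gt0 ?c2_gt0.
apply: psdmxD; first apply: psdmxD; first exact: psdmx_outer.
  exact: psdmxZ (psdmx_delta _ _).
exact: psdmxZ (psdmx_delta _ _).
Qed.

Lemma qlov_obj_opt : qlov_obj rho_opt T_opt = lam.
Proof.
rewrite qlov_objE tr_rho_opt /T_opt !braketD !braket_Phi_tens /v_opt /K_opt.
rewrite !(linearD, linearZ) /= !trmx_delta.
rewrite !(mulmxDl, mulmxDr) -!scalemxAl -?scalemxAr !mul_delta_mx_cond /= !mulr0n.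
rewrite !(mxtraceD, mxtraceZ, mxtrace_delta, mxtrace0) /=.
by field; apply/andP; split; [exact: c_neq0 | exact: add1_c2_neq0].
Qed.

Lemma lovasz_valueC :
  ((2 + cos a ^+ 2 + (cos a ^+ 2)^-1)%:C)%C = lam :> C.
Proof. by rewrite !(rmorphD, rmorphXn, fmorphV, rmorph_nat). Qed.

End Nalpha.

Lemma sin2_le_cos2_pi4 (R : realType) (a : R) :
  - (pi / 4) <= a <= pi / 4 -> sin a ^+ 2 <= cos a ^+ 2.
Proof.
move=> /andP [a_ge a_le].
have : 0 <= cos (a *+ 2) by apply: cos_ge0_pihalf; apply/andP; split; lra.
by rewrite cos_mulr2n sin2cos2; lra.
Qed.

Lemma addr_inv_gt2 {R : realFieldType} {x : R} : 0 < x -> x != 1 -> 2 < x + x^-1.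
Proof.
move=> x_gt0 x_neq1; rewrite -subr_gt0.
have -> : x + x^-1 - 2 = (x - 1) ^+ 2 / x by field; rewrite gt_eqF.
by rewrite divr_gt0 // exprn_even_gt0 //= subr_eq0.
Qed.

Theorem proposition2 (R : realType) (a : R) :
  0 < a -> a <= pi / 4 ->
  is_qlovasz (nc_graph [:: E_al a; D_al a])
    (((2 + cos a ^+ 2 + (cos a ^+ 2)^-1)%:C)%C) /\
  4 < 2 + cos a ^+ 2 + (cos a ^+ 2)^-1.
Proof.
move=> a_gt0 a_le; have pi_gt0 := pi_gt0 R.
have hc : 0 < cos a by apply: cos_gt0_pihalf; apply/andP; split; lra.
have hs : 0 < sin a by apply: sin_gt0_pihalf; apply/andP; split; lra.
have hsc : sin a ^+ 2 <= cos a ^+ 2 by apply: sin2_le_cos2_pi4; apply/andP; split; lra.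
split; last first.
  have c2_neq1 : cos a ^+ 2 != 1 by rewrite cos2sin2 lt_eqF // ltrBlDr ltrDl exprn_gt0.
  by have := addr_inv_gt2 (exprn_gt0 2 hc) c2_neq1; lra.
rewrite lovasz_valueC; split.
  exists (rho_opt a), (T_opt a); split; first exact: T_opt_in_tens.
  split; first exact: tr_rho_opt.
  split; first exact: rho_opt_psd.
  by split; [exact: X_opt_psd | exact: qlov_obj_opt].
by move=> rho T hT htr rho_psd X_psd; exact: qlov_obj_le.
Qed.
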